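(* Let $f:B\to C$ and $g:C\to D$ be fibrations between objects of $\mathcal G$. Then $g\circ f:B\to D$ is a fibration, i.e. $\ker(g\circ f)$ is a strict subobject of $B$.
   Context: Let $\Lambda$ be a finite dimensional algebra over a field and $\mathrm{mod}\text-\Lambda$ the category of finitely generated right $\Lambda$-modules. Fix a torsion class $\mathcal G\subseteq\mathrm{mod}\text-\Lambda$, i.e. a class of modules closed under isomorphisms, extensions and quotients. For $B\in\mathcal G$, a subobject of $B$ is a submodule of $B$ that lies in $\mathcal G$. A subobject $A\subseteq B$ is a strict subobject if $A\cap B'\in\mathcal G$ for every subobject $B'$ of $B$. A strict quotient of $B$ is a quotient $B/A$ with $A$ a strict subobject of $B$; an epimorphism $B\to C$ between objects of $\mathcal G$ is called a fibration if its kernel is a strict subobject of $B$ (i.e. it is the quotient map onto a strict quotient). *)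

(* Right Lambda-modules are modeled as left modules over the
   converse ring Lambda^c (lmodType (Lambda^c)). *)
From HB Require Import structures.
From mathcomp Require Import all_boot all_order all_algebra.
From mathcomp Require Import falgebra.
Set Implicit Arguments. Unset Strict Implicit. Unset Printing Implicit Defensive.
Import GRing.Theory.
Local Open Scope ring_scope.

Definition surj (X Y : Type) (f : X -> Y) : Prop := forall y, exists x, f x = y.

Section Defs.
Variables (K : fieldType) (L : falgType K).

Definition is_hom (M N : lmodType L^c) (f : M -> N) : Prop :=
  forall (a : L^c) (u v : M), f (a *: u + v) = a *: f u + f v.

Definition fin_gen (M : lmodType L^c) : Prop :=
  exists s : seq M, forall x : M,
    exists c : 'I_(size s) -> L^c, x = \sum_(i < size s) c i *: s`_i.

Definition submodule (M : lmodType L^c) (A : M -> Prop) : Prop :=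
  A 0 /\ forall (a : L^c) (u v : M), A u -> A v -> A (a *: u + v).

Definition torsion_class (G : lmodType L^c -> Prop) : Prop :=
  [/\ (forall M, G M -> fin_gen M),
      (forall (M N : lmodType L^c) (f : M -> N),
          is_hom f -> bijective f -> G M -> G N),
      (forall (A B C : lmodType L^c) (i : A -> B) (p : B -> C),
          is_hom i -> is_hom p -> injective i -> surj p ->
          (forall b, p b = 0 <-> exists a, b = i a) ->
          G A -> G C -> G B) &
      (forall (B C : lmodType L^c) (p : B -> C),
          is_hom p -> surj p -> G B -> G C)].

Definition sub_in (G : lmodType L^c -> Prop) (B : lmodType L^c) (A : B -> Prop)
  : Prop :=
  exists (M : lmodType L^c) (i : M -> B),
    [/\ G M, is_hom i, injective i & forall b, A b <-> exists m, b = i m].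

Definition subobject (G : lmodType L^c -> Prop) (B : lmodType L^c) (A : B -> Prop)
  : Prop := submodule A /\ sub_in G A.

Definition strict_subobject (G : lmodType L^c -> Prop) (B : lmodType L^c)
  (A : B -> Prop) : Prop :=
  subobject G A /\
  forall B' : B -> Prop, subobject G B' -> sub_in G (fun b => A b /\ B' b).

Definition fibration (G : lmodType L^c -> Prop) (B C : lmodType L^c) (f : B -> C)
  : Prop :=
  [/\ is_hom f, surj f & strict_subobject G (fun b => f b = 0)].
End Defs.

(* The kernel of g \o f is an extension of ker g by ker f, and for a
   subobject B' of B, ker (g \o f) /\ B' is an extension of ker g /\ f(B') by
   ker f /\ B'.  Strictness of f and g puts both ends of each extension in the
   torsion class, and closure under extensions does the rest; f(B') lies in
   the class because the class is closed under quotients. *)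
From HB Require Import structures.
From mathcomp Require Import all_boot all_order all_algebra.
From mathcomp Require Import falgebra.
From Stdlib Require Import ClassicalEpsilon.
Set Implicit Arguments. Unset Strict Implicit. Unset Printing Implicit Defensive.
Import GRing.Theory.
Local Open Scope ring_scope.

Definition asbool (P : Prop) : bool :=
  if excluded_middle_informative P then true else false.

Lemma asboolP (P : Prop) : reflect P (asbool P).
Proof. by rewrite /asbool; case: excluded_middle_informative => h; constructor. Qed.

Section Hom.
Variables (K : fieldType) (L : falgType K).

Lemma hom0 (M N : lmodType L^c) (f : M -> N) : is_hom f -> f 0 = 0.
Proof.
move=> hf; have := hf 1 0 0; rewrite scale1r !addr0 => /(congr1 (fun x => x - f 0)).
by rewrite subrr addrK scale1r.
Qed.

Lemma hom_comp (M N P : lmodType L^c) (f : M -> N) (g : N -> P) :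
  is_hom f -> is_hom g -> is_hom (g \o f).
Proof. by move=> hf hg a u v /=; rewrite hf hg. Qed.

Lemma submoduleI (M : lmodType L^c) (A A' : M -> Prop) :
  submodule A -> submodule A' -> submodule (fun x => A x /\ A' x).
Proof. by move=> [A0 Acl] [A'0 A'cl]; split => // a u v [? ?] [? ?]; split; auto. Qed.

Lemma submodule_ker (M N : lmodType L^c) (f : M -> N) :
  is_hom f -> submodule (fun x => f x = 0).
Proof.
move=> hf; split; first exact: hom0.
by move=> a u v fu fv; rewrite hf fu fv scaler0 addr0.
Qed.

Lemma submodule_image (M N : lmodType L^c) (f : M -> N) (A : M -> Prop) :
  is_hom f -> submodule A -> submodule (fun y => exists x, A x /\ f x = y).
Proof.
move=> hf [A0 Acl]; split; first by exists 0; rewrite (hom0 hf).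
move=> a _ _ [u [Au <-]] [v [Av <-]].
by exists (a *: u + v); split; [exact: Acl | exact: hf].
Qed.

Lemma hom_factor (M N P : lmodType L^c) (h : M -> P) (i : N -> P) :
  is_hom h -> is_hom i -> injective i -> (forall m, exists n, h m = i n) ->
  exists p : M -> N, is_hom p /\ forall m, i (p m) = h m.
Proof.
move=> hh hi ii hrange.
pose p m := proj1_sig (constructive_indefinite_description _ (hrange m)).
have pE m : i (p m) = h m.
  by rewrite /p; case: constructive_indefinite_description.
by exists p; split => // a u v; apply: ii; rewrite hi !pE hh.
Qed.

End Hom.

Section SubmoduleType.
Variables (K : fieldType) (L : falgType K) (M : lmodType L^c) (P : M -> Prop).
Hypothesis HP : submodule P.

Definition submod_pred : pred M := fun x => asbool (P x).
(* The dummy argument makes [HP] available to the module instance below. *)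
Definition submod_type of submodule P := {x : M | submod_pred x}.
HB.instance Definition _ := [isSub of submod_type HP for (@sval M submod_pred)].
HB.instance Definition _ := [Choice of submod_type HP by <:].

Lemma submod_pred_closed : subsemimod_closed submod_pred.
Proof.
apply: GRing.submod_closed_semi; split; first by apply/asboolP; case: HP.
move=> a u v /asboolP Pu /asboolP Pv; apply/asboolP.
by case: HP => _; apply.
Qed.

HB.instance Definition _ :=
  GRing.SubChoice_isSubLmodule.Build _ _ _ (submod_type HP) submod_pred_closed.

Definition submod_val : submod_type HP -> M := val.

Lemma submod_val_hom : is_hom submod_val.
Proof. by []. Qed.

Lemma submod_val_range x : P x <-> exists s, x = submod_val s.
Proof.
split; first by move=> Px; exists (Sub x (introT (asboolP _) Px)).
by case=> [[y Py]] ->; apply/asboolP.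
Qed.

End SubmoduleType.

Arguments submod_val {K L M P HP}.
Arguments submod_val_hom {K L M P} HP.

Section TorsionClass.
Variables (K : fieldType) (L : falgType K) (G : lmodType L^c -> Prop).
Hypothesis HG : torsion_class G.

Lemma sub_in_submod_type (M : lmodType L^c) (P : M -> Prop) (HP : submodule P) :
  G (submod_type HP) -> sub_in G P.
Proof.
move=> GP; exists (submod_type HP), submod_val.
by split => //; [exact: val_inj | exact: submod_val_range].
Qed.

Lemma eq_sub_in (M : lmodType L^c) (A A' : M -> Prop) :
  (forall x, A x <-> A' x) -> sub_in G A -> sub_in G A'.
Proof. by move=> eAA' [N [i [GN hi ii im]]]; exists N, i; split => // x; rewrite -eAA'. Qed.

(* P sits in the short exact sequence 0 -> P /\ ker h -> P -> h(P) -> 0,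
   with h(P) = Q. *)
Lemma sub_in_extension (B C : lmodType L^c) (P : B -> Prop) (HP : submodule P)
  (h : B -> C) (Q : C -> Prop) :
  is_hom h -> sub_in G (fun b => P b /\ h b = 0) -> sub_in G Q ->
  (forall b, P b -> Q (h b)) -> (forall c, Q c -> exists b, P b /\ h b = c) ->
  sub_in G P.
Proof.
case: HG => _ _ Gext _.
move=> hh [MK [iK [GK hK injK imK]]] [MQ [iQ [GQ hQ injQ imQ]]] PQ QP.
apply: (@sub_in_submod_type _ _ HP).
have [i [hi iE]] : exists i : MK -> submod_type HP,
    is_hom i /\ forall m, submod_val (i m) = iK m.
  apply: (hom_factor hK (submod_val_hom HP) val_inj).
  by move=> m; apply/submod_val_range; have [] := proj2 (imK (iK m)) (ex_intro _ m erefl).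
have [p [hp pE]] : exists p : submod_type HP -> MQ,
    is_hom p /\ forall s, iQ (p s) = h (submod_val s).
  apply: (hom_factor (hom_comp (submod_val_hom HP) hh) hQ injQ).
  by move=> s; apply/imQ/PQ/submod_val_range; exists s.
apply: (Gext MK _ MQ i p hi hp) => //.
- by move=> x y /(congr1 submod_val); rewrite !iE => /injK.
- move=> m; have [b [Pb hb]] := QP _ (proj2 (imQ _) (ex_intro _ m erefl)).
  have [s bE] := proj1 (submod_val_range HP b) Pb.
  by exists s; apply: injQ; rewrite pE -bE hb.
- move=> s; split => [ps0|[m ->]].
    have [|m em] := proj1 (imK (submod_val s)).
      by split; [apply/submod_val_range; exists s | rewrite -pE ps0 (hom0 hQ)].
    by exists m; apply: val_inj; exact: etrans em (esym (iE m)).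
  apply: injQ; rewrite pE iE (hom0 hQ).
  by have [] := proj2 (imK (iK m)) (ex_intro _ m erefl).
Qed.

Lemma subobject_image (B C : lmodType L^c) (f : B -> C) (B' : B -> Prop) :
  is_hom f -> subobject G B' -> subobject G (fun c => exists b, B' b /\ f b = c).
Proof.
case: HG => _ _ _ Gquot.
move=> hf [SB' [MB [iB [GB hB injB imB]]]].
have HP := submodule_image hf SB'.
split => //; apply: (@sub_in_submod_type _ _ HP).
have [q [hq qE]] : exists q : MB -> submod_type HP,
    is_hom q /\ forall m, submod_val (q m) = f (iB m).
  apply: (hom_factor (hom_comp hB hf) (submod_val_hom HP) val_inj).
  by move=> m; apply/submod_val_range; exists (iB m); split => //; apply/imB; exists m.
apply: (Gquot MB _ q hq) => // s.
have [b [B'b fb]] := proj2 (submod_val_range HP (submod_val s)) (ex_intro _ s erefl).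
have [m em] := proj1 (imB b) B'b.
by exists m; apply: val_inj; exact: etrans (qE m) (etrans (congr1 f (esym em)) fb).
Qed.

End TorsionClass.

Theorem mainTheorem3 (K : fieldType) (L : falgType K)
  (G : lmodType L^c -> Prop) (HG : torsion_class G)
  (B C D : lmodType L^c) (f : B -> C) (g : C -> D) :
  G B -> G C -> G D -> fibration G f -> fibration G g ->
  fibration G (g \o f).
Proof.
move=> _ _ _ [hf sf [[Kf Sf] strf]] [hg sg [[Kg Sg] strg]].
have hgf := hom_comp hf hg.
have Kgf := submodule_ker hgf.
have f_onto_kerg c : g c = 0 -> exists b, g (f b) = 0 /\ f b = c.
  by move=> gc; have [b fb] := sf c; exists b; rewrite fb.
split=> //; first by move=> d; have [c <-] := sg d; have [b <-] := sf c; exists b.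
split.
  split => //; apply: (sub_in_extension HG Kgf hf _ Sg _ f_onto_kerg) => //.
  by apply: eq_sub_in Sf => b; split => [fb|[]//]; rewrite /= fb (hom0 hg).
move=> B' SB'.
apply: (sub_in_extension HG (submoduleI Kgf (proj1 SB')) hf
         (Q := fun c => g c = 0 /\ exists b, B' b /\ f b = c)).
- apply: eq_sub_in (strf _ SB') => b.
  by split=> [[fb B'b]|[[]]//]; rewrite /= fb (hom0 hg).
- exact: strg _ (subobject_image HG hf SB').
- by move=> b [gb B'b]; split => //; exists b.
- by move=> c [gc [b [B'b fb]]]; exists b; rewrite /= fb.
Qed.
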